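(* Let $G$ be a finite group and $S$ one of the Conway groups $Co_1, Co_2, Co_3$. If $|G| = |S|$, then $G$ is neither a Frobenius group nor a 2-Frobenius group.
   Context: A finite group $G$ is a 2-Frobenius group if it has a normal series $1 \trianglelefteq A \trianglelefteq B \trianglelefteq G$ such that $B$ is a Frobenius group with Frobenius kernel $A$ and $G/A$ is a Frobenius group with Frobenius kernel $B/A$. Orders: $|Co_1|=2^{21}\cdot3^9\cdot5^4\cdot7^2\cdot11\cdot13\cdot23$, $|Co_2|=2^{18}\cdot3^6\cdot5^3\cdot7\cdot11\cdot23$, $|Co_3|=2^{10}\cdot3^7\cdot5^3\cdot7\cdot11\cdot23$. *)

From mathcomp Require Import all_boot all_fingroup all_solvable.
Set Implicit Arguments. Unset Strict Implicit. Unset Printing Implicit Defensive.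
Local Open Scope group_scope.

Definition Co1_order : nat := (2^21 * 3^9 * 5^4 * 7^2 * 11 * 13 * 23)%N.
Definition Co2_order : nat := (2^18 * 3^6 * 5^3 * 7 * 11 * 23)%N.
Definition Co3_order : nat := (2^10 * 3^7 * 5^3 * 7 * 11 * 23)%N.

Definition two_Frobenius_group (gT : finGroupType) (G : {group gT}) : Prop :=
  exists (A B : {group gT}),
    [/\ A <| G, B <| G, A \subset B,
        [Frobenius B with kernel A]
      & [Frobenius (G / A) with kernel (B / A)]].

From mathcomp Require Import all_boot all_fingroup all_solvable all_character zify.
Set Implicit Arguments. Unset Strict Implicit. Unset Printing Implicit Defensive.

(* The group theory reduces to one arithmetic fact about a Frobenius group G
   with kernel K (which exists by Frobenius' theorem): for any p and any
   prime r not dividing |K|, the r-part of |G| divides |K|_p - 1.  Indeed,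
   by the Frattini argument a Sylow r-subgroup R of N_G(P), where P is a
   Sylow p-subgroup of K, is a full Sylow r-subgroup of G; it meets K
   trivially, hence acts fixed-point-freely on P, so |R| divides |P| - 1.  Applied to G (and to B and G/A in a 2-Frobenius
   series 1 < A < B < G) this constrains how the primes of |G| can be
   distributed among the factors of the series. *)

Section FrobeniusKernelSylow.
Local Open Scope group_scope.
Variables (gT : finGroupType) (G K : {group gT}).
Hypothesis frobGK : [Frobenius G with kernel K].

(* A subgroup of G meeting K trivially acts fixed-point-freely on every
   subgroup of K, since nontrivial elements of K have centralizers in K. *)
Lemma Frobenius_ker_semiregular (P R : {group gT}) :
  P \subset K -> R \subset G -> K :&: R = 1 -> semiregular P R.
Proof.
have [_ _ _ regK] := Frobenius_kerP frobGK.
move=> sPK sRG tiKR x /setD1P[ntx Rx]; apply/trivgP/subsetP=> y /setIP[Py cxy].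
rewrite inE; apply: contraR ntx => nty; have Ky : y \in K^# by rewrite !inE nty (subsetP sPK).
have Kx : x \in K by apply: (subsetP (regK y Ky)); rewrite inE (subsetP sRG) // cent1C.
have : x \in K :&: R by rewrite inE Kx.
by rewrite tiKR inE; apply.
Qed.

(* Frattini argument: the normalizer in G of a Sylow subgroup of K carries
   the full r-part of |G| for every prime r not dividing |K|. *)
Lemma Frobenius_Sylow_norm_logn p r (P : {group gT}) :
  prime r -> p.-Sylow(K) P -> ~~ (r %| #|K|)%N -> logn r #|'N_G(P)| = logn r #|G|.
Proof.
have [_ _ nsKG _] := Frobenius_kerP frobGK.
move=> r_pr sylP rK; have := congr1 (logn r) (mul_cardG K 'N_G(P)).
rewrite (Frattini_arg nsKG sylP) !lognM ?cardG_gt0 // => logE.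
have logK0 m : (m %| #|K|)%N -> logn r m = 0%N.
  by move=> mK; rewrite logn_coprime // prime_coprime // (contra (fun rm => dvdn_trans rm mK)).
by rewrite (logK0 #|K|) // (logK0 #|K :&: _|) ?cardSg ?subsetIl // add0n addn0 in logE.
Qed.

Lemma Frobenius_Sylow_dvd_pred p r :
  prime r -> ~~ (r %| #|K|)%N -> (r ^ logn r #|G| %| p ^ logn p #|K| - 1)%N.
Proof.
move=> r_pr rK; have [P sylP] := Sylow_exists p K.
have [sPK _ _] := and3P sylP.
have [R sylR] := Sylow_exists r 'N_G(P).
have [sRN _ _] := and3P sylR.
have cardR : #|R| = (r ^ logn r #|G|)%N.
  by rewrite (card_Hall sylR) p_part (Frobenius_Sylow_norm_logn r_pr sylP).
have coKR : coprime #|K| #|R| by rewrite cardR coprimeXr // coprime_sym prime_coprime.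
have regPR : semiregular P R.
  apply: Frobenius_ker_semiregular (coprime_TIg coKR) => //.
  by rewrite (subset_trans sRN) ?subsetIl.
have := regular_norm_dvd_pred (subset_trans sRN (subsetIr _ _)) regPR.
by rewrite cardR (card_Hall sylP) p_part subn1.
Qed.

Lemma Frobenius_order_split :
  [/\ #|G| = (#|K| * #|G : K|)%N, coprime #|K| #|G : K|, 1 < #|K| & 1 < #|G : K|]%N.
Proof.
have [ntK ltKG nsKG _] := Frobenius_kerP frobGK.
split; first by rewrite Lagrange ?normal_sub.
- exact: Frobenius_ker_coprime.
- by rewrite cardG_gt1.
by rewrite indexg_gt1 proper_subn.
Qed.

End FrobeniusKernelSylow.

Definition modexp (b e m : nat) : nat := iter e (fun x => b * x %% m) (1 %% m).

Lemma modexpE b e m : modexp b e m = b ^ e %% m.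
Proof. by elim: e => [|e IHe] //=; rewrite IHe modnMmr expnS. Qed.

Definition dvd_pow_pred (d b e : nat) : bool := modexp b e d == 1 %% d.

Lemma dvd_pow_predP d b e : 0 < b -> reflect (d %| b ^ e - 1) (dvd_pow_pred d b e).
Proof.
move=> b_gt0; rewrite /dvd_pow_pred modexpE eqn_mod_dvd; first exact: idP.
by rewrite expn_gt0 b_gt0.
Qed.

Fixpoint subseqs (T : Type) (s : seq T) : seq (seq T) :=
  if s is x :: s' then [seq x :: u | u <- subseqs s'] ++ subseqs s' else [:: [::]].

Lemma filter_subseqs (T : eqType) (a : pred T) (s : seq T) : filter a s \in subseqs s.
Proof.
elim: s => [|x s IHs] //=; rewrite mem_cat.
by case: (a x); rewrite ?IHs ?orbT // map_f.
Qed.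

(* A factored number, given as a list of (prime, exponent) pairs. *)
Definition fvalue (fact : seq (nat * nat)) : nat := \prod_(pe <- fact) pe.1 ^ pe.2.
Definition fprimes (fact : seq (nat * nat)) : seq nat := unzip1 fact.
Definition fexp (fact : seq (nat * nat)) (q : nat) : nat :=
  sumn [seq pe.2 | pe <- fact & pe.1 == q].

Lemma fvalue_gt0 fact : all prime (fprimes fact) -> 0 < fvalue fact.
Proof.
move=> /allP fact_pr; rewrite /fvalue big_seq_cond prodn_cond_gt0 // => -[p e].
by case/andP=> /(map_f fst) /fact_pr /prime_gt0 p_gt0 _; rewrite expn_gt0 p_gt0.
Qed.

Lemma logn_fvalue fact q : all prime (fprimes fact) -> logn q (fvalue fact) = fexp fact q.
Proof.
elim: fact => [|[p e] fact IHfact] /=; first by rewrite /fvalue big_nil logn1.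
case/andP=> p_pr fact_pr; have := fvalue_gt0 fact_pr.
rewrite /fvalue big_cons /= => rest_gt0; rewrite lognM ?expn_gt0 ?(prime_gt0 p_pr) //.
rewrite -/(fvalue fact) IHfact // lognX logn_prime // /fexp /= eq_sym.
by case: eqP; rewrite ?muln1 ?muln0.
Qed.

Lemma fexp_gt0 fact q :
  all (fun pe => 0 < pe.2) fact -> (0 < fexp fact q) = (q \in fprimes fact).
Proof.
elim: fact => [|[p e] fact IHfact] //= /andP[/= e_gt0 /IHfact {}IHfact].
by rewrite /fexp /= inE eq_sym; case: eqP => /= _; [rewrite addn_gt0 e_gt0 | exact: IHfact].
Qed.

Lemma prime_dvd_coprime p x y : prime p -> coprime x y -> p %| x -> ~~ (p %| y).
Proof. by move=> p_pr co_xy px; rewrite -prime_coprime // (coprime_dvdl px). Qed.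

Lemma logn_mul_ndvd p x y :
  prime p -> 0 < x -> 0 < y -> ~~ (p %| y) -> logn p (x * y) = logn p x.
Proof.
by move=> p_pr x_gt0 y_gt0 py; rewrite lognM // (@logn_coprime p y) ?addn0 // prime_coprime.
Qed.

(* To keep the moduli small, only r ^ min(e_r, precision) is tested in place
   of the full r-part r ^ e_r; this weaker necessary condition suffices. *)
Definition precision : nat := 3.
Definition rpart_low (fact : seq (nat * nat)) (r : nat) : nat :=
  r ^ minn (fexp fact r) precision.

Lemma rpart_low_dvd fact r : rpart_low fact r %| r ^ fexp fact r.
Proof. by rewrite dvdn_exp2l ?geq_minl. Qed.

(* kp is an admissible set of kernel primes for a Frobenius group of order
   fvalue fact: kp and its complement are nonempty, and for p in kp and r
   outside kp, the (truncated) r-part divides p ^ e_p - 1. *)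
Definition Frobenius_split (fact : seq (nat * nat)) (kp : seq nat) : bool :=
  [&& kp != [::], has (fun r => r \notin kp) (fprimes fact) &
      all (fun p => all (fun r => (r \in kp) ||
        dvd_pow_pred (rpart_low fact r) p (fexp fact p)) (fprimes fact)) kp].

(* For a 2-Frobenius series 1 < A < B < G with bp the primes of |B/A|: the
   primes that can divide |A| (Frobenius kernel of B), and those that can
   divide |G/B| (Frobenius complement of B/A in G/A). *)
Definition inner_primes (fact : seq (nat * nat)) (bp : seq nat) : seq nat :=
  [seq p <- fprimes fact | (p \notin bp) &&
     all (fun r => has (dvd_pow_pred (rpart_low fact r) p) (iota 1 (fexp fact p))) bp].

Definition outer_primes (fact : seq (nat * nat)) (bp : seq nat) : seq nat :=
  [seq q <- fprimes fact | (q \notin bp) && all (fun p => dvd_pow_pred q p (fexp fact p)) bp].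

Definition two_Frobenius_split (fact : seq (nat * nat)) (bp : seq nat) : bool :=
  [&& bp != [::], inner_primes fact bp != [::], outer_primes fact bp != [::] &
      all (fun p => [|| p \in bp, p \in inner_primes fact bp | p \in outer_primes fact bp])
          (fprimes fact)].

Definition Frobenius_free_order (fact : seq (nat * nat)) : bool :=
  [&& all prime (fprimes fact), all (fun pe => 0 < pe.2) fact,
      all (fun kp => ~~ Frobenius_split fact kp) (subseqs (fprimes fact)) &
      all (fun bp => ~~ two_Frobenius_split fact bp) (subseqs (fprimes fact))].

Section FactoredOrder.
Variable fact : seq (nat * nat).
Hypotheses (fact_prime : all prime (fprimes fact)) (fact_pos : all (fun pe => 0 < pe.2) fact).
Local Notation n := (fvalue fact).
Local Notation ps := (fprimes fact).

Lemma mem_fprimes q : prime q -> (q \in ps) = (q %| n).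
Proof.
move=> q_pr; rewrite -fexp_gt0 // -logn_fvalue // logn_gt0 mem_primes.
by rewrite q_pr fvalue_gt0.
Qed.

Lemma fprimes_prime q : q \in ps -> prime q.
Proof. exact: (allP fact_prime). Qed.

Lemma mem_filter_dvd m q : prime q -> q %| m -> m %| n -> q \in [seq p <- ps | p %| m].
Proof. by move=> q_pr qm mn; rewrite mem_filter qm mem_fprimes // (dvdn_trans qm). Qed.

Lemma Frobenius_split_of_order k h :
  n = k * h -> coprime k h -> 1 < k -> 1 < h ->
  (forall p r, prime r -> ~~ (r %| k) -> r ^ logn r n %| p ^ logn p k - 1) ->
  Frobenius_split fact [seq p <- ps | p %| k].
Proof.
move=> nE co_kh k_gt1 h_gt1 frobK.
have [k_gt0 h_gt0] := (ltnW k_gt1, ltnW h_gt1).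
have pk_in : pdiv k \in [seq p <- ps | p %| k].
  by apply: mem_filter_dvd; rewrite ?pdiv_prime ?pdiv_dvd // nE dvdn_mulr.
apply/and3P; split; first by apply: contraTneq pk_in => ->.
- apply/hasP; exists (pdiv h); first by rewrite mem_fprimes ?pdiv_prime // nE dvdn_mull ?pdiv_dvd.
  rewrite mem_filter negb_and -prime_coprime ?pdiv_prime //.
  by rewrite coprime_sym (coprime_dvdr (pdiv_dvd h) co_kh).
apply/allP=> p; rewrite mem_filter => /andP[pk /fprimes_prime p_pr].
apply/allP=> r /[dup] r_ps /fprimes_prime r_pr; rewrite mem_filter r_ps andbT.
case: (boolP (r %| k)) => //= rk; apply/dvd_pow_predP; first exact: prime_gt0.
have ph : ~~ (p %| h) by rewrite -prime_coprime // (coprime_dvdl pk).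
rewrite -!logn_fvalue // (dvdn_trans (rpart_low_dvd _ _)) //.
by rewrite -logn_fvalue // {2}nE logn_mul_ndvd // frobK.
Qed.

Section TwoFrobeniusOrder.
Variables a b c : nat.
Hypotheses (nE : n = a * b * c) (co_ab : coprime a b) (co_bc : coprime b c).
Hypotheses (a_gt1 : 1 < a) (b_gt1 : 1 < b) (c_gt1 : 1 < c).
(* The arithmetic content of [Frobenius B with kernel A], |A| = a, |B| = ab. *)
Hypothesis frobB :
  forall p r, prime r -> ~~ (r %| a) -> r ^ logn r (a * b) %| p ^ logn p a - 1.
(* The arithmetic content of [Frobenius G/A with kernel B/A], |B/A| = b. *)
Hypothesis frobGA :
  forall p q, prime q -> ~~ (q %| b) -> q ^ logn q (b * c) %| p ^ logn p b - 1.

Let a_gt0 : 0 < a := ltnW a_gt1.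
Let b_gt0 : 0 < b := ltnW b_gt1.
Let c_gt0 : 0 < c := ltnW c_gt1.
Local Notation bp := [seq p <- ps | p %| b].

Lemma prime_dvd_order q : prime q -> q %| n = [|| q %| a, q %| b | q %| c].
Proof. by move=> q_pr; rewrite nE !Euclid_dvdM // orbA. Qed.

Lemma mid_prime_ndvd r : prime r -> r %| b -> ~~ (r %| a) /\ ~~ (r %| c).
Proof.
move=> r_pr rb; split; last exact: prime_dvd_coprime r_pr co_bc rb.
by apply: prime_dvd_coprime r_pr _ rb; rewrite coprime_sym.
Qed.

Lemma mem_inner_primes p : prime p -> p %| a -> ~~ (p %| b) -> p \in inner_primes fact bp.
Proof.
move=> p_pr pa pb; rewrite mem_filter mem_filter negb_and pb mem_fprimes //.
rewrite prime_dvd_order // pa andbT; apply/allP=> r; rewrite mem_filter.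
case/andP=> rb /fprimes_prime r_pr; have [ra rc] := mid_prime_ndvd r_pr rb.
apply/hasP; exists (logn p a).
  rewrite mem_iota add1n ltnS logn_gt0 mem_primes p_pr a_gt0 pa -logn_fvalue //.
  by rewrite dvdn_leq_log ?fvalue_gt0 // nE -mulnA dvdn_mulr.
apply/dvd_pow_predP; first exact: prime_gt0.
rewrite (dvdn_trans (rpart_low_dvd _ _)) // -logn_fvalue // nE logn_mul_ndvd //.
  exact: frobB.
by rewrite muln_gt0 a_gt0.
Qed.

Lemma mem_outer_primes q : prime q -> q %| c -> ~~ (q %| b) -> q \in outer_primes fact bp.
Proof.
move=> q_pr qc qb; rewrite mem_filter mem_filter negb_and qb mem_fprimes //.
rewrite prime_dvd_order // qc !orbT andbT; apply/allP=> p; rewrite mem_filter.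
case/andP=> pb /fprimes_prime p_pr; have [pa pc] := mid_prime_ndvd p_pr pb.
apply/dvd_pow_predP; first exact: prime_gt0.
have logq_gt0 : 0 < logn q (b * c).
  by rewrite logn_gt0 mem_primes q_pr muln_gt0 b_gt0 c_gt0 dvdn_mull.
rewrite (dvdn_trans (dvdn_exp logq_gt0 (dvdnn q))) // -logn_fvalue // nE.
rewrite (@logn_mul_ndvd p (a * b)) ?muln_gt0 ?a_gt0 //.
by rewrite (mulnC a b) (@logn_mul_ndvd p b) // frobGA.
Qed.

Lemma two_Frobenius_split_of_order : two_Frobenius_split fact bp.
Proof.
have bp_b : pdiv b \in bp.
  by apply: mem_filter_dvd; rewrite ?pdiv_prime ?pdiv_dvd // nE dvdn_mulr ?dvdn_mull.
have inner_a : pdiv a \in inner_primes fact bp.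
  apply: mem_inner_primes; rewrite ?pdiv_prime ?pdiv_dvd //.
  exact: prime_dvd_coprime (pdiv_prime a_gt1) co_ab (pdiv_dvd a).
have outer_c : pdiv c \in outer_primes fact bp.
  apply: mem_outer_primes; rewrite ?pdiv_prime ?pdiv_dvd //.
  by apply: prime_dvd_coprime (pdiv_prime c_gt1) _ (pdiv_dvd c); rewrite coprime_sym.
apply/and4P; split; [by apply: contraTneq bp_b => -> | by apply: contraTneq inner_a => ->
                    | by apply: contraTneq outer_c => -> | apply/allP=> p p_ps].
have p_pr := fprimes_prime p_ps.
have := p_ps; rewrite mem_fprimes // prime_dvd_order // => /or3P[pa | pb | pc].
- have pb := prime_dvd_coprime p_pr co_ab pa.
  by rewrite mem_inner_primes ?orbT.
- by rewrite mem_filter pb p_ps.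
case: (boolP (p %| b)) => [pb | pb]; first by rewrite mem_filter pb p_ps.
by rewrite mem_outer_primes ?orbT.
Qed.

End TwoFrobeniusOrder.

End FactoredOrder.

Section FrobeniusFreeOrder.
Local Open Scope group_scope.
Variables (fact : seq (nat * nat)) (gT : finGroupType) (G : {group gT}).
Hypotheses (freeF : Frobenius_free_order fact) (orderG : #|G| = fvalue fact).

Lemma not_Frobenius_of_order : ~~ [Frobenius G].
Proof.
have /and4P[fact_prime fact_pos noF _] := freeF.
apply/negP=> /existsP[H /Frobenius_kernel_exists[K /FrobeniusWker frobGK]].
have [oG co_KG K_gt1 iK_gt1] := Frobenius_order_split frobGK.
have /negP := allP noF _ (filter_subseqs (fun p => p %| #|K|) (fprimes fact)); apply.
apply: Frobenius_split_of_order co_KG K_gt1 iK_gt1 _ => //; first by rewrite -orderG.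
by move=> p r r_pr rK; rewrite -orderG; apply: Frobenius_Sylow_dvd_pred.
Qed.

Lemma not_two_Frobenius_of_order : ~ two_Frobenius_group G.
Proof.
have /and4P[fact_prime fact_pos _ no2F] := freeF.
move=> [A [B [nsAG nsBG _ frobBA frobGABA]]].
have [oB co_AB A_gt1 _] := Frobenius_order_split frobBA.
have [oGA co_BAGA BA_gt1 iBA_gt1] := Frobenius_order_split frobGABA.
have oBA : #|B / A| = #|B : A|.
  by rewrite card_quotient // (subset_trans (normal_sub nsBG)) ?normal_norm.
have /negP := allP no2F _ (filter_subseqs (fun p => p %| #|B / A|) (fprimes fact)); apply.
apply: (@two_Frobenius_split_of_order _ _ _ #|A| #|B / A| #|G / A : B / A|) => //.
- by rewrite -orderG -mulnA -oGA card_quotient ?normal_norm // Lagrange ?normal_sub.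
- by rewrite oBA.
- by move=> p r r_pr rA; rewrite oBA -oB; apply: Frobenius_Sylow_dvd_pred.
by move=> p q q_pr qBA; rewrite -oGA; apply: Frobenius_Sylow_dvd_pred.
Qed.

Lemma Frobenius_free_order_excluded : ~~ [Frobenius G] /\ ~ two_Frobenius_group G.
Proof. by split; [exact: not_Frobenius_of_order | exact: not_two_Frobenius_of_order]. Qed.

End FrobeniusFreeOrder.

Definition Co1_fact : seq (nat * nat) :=
  [:: (2, 21); (3, 9); (5, 4); (7, 2); (11, 1); (13, 1); (23, 1)].
Definition Co2_fact : seq (nat * nat) := [:: (2, 18); (3, 6); (5, 3); (7, 1); (11, 1); (23, 1)].
Definition Co3_fact : seq (nat * nat) := [:: (2, 10); (3, 7); (5, 3); (7, 1); (11, 1); (23, 1)].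

Lemma Co1_orderE : Co1_order = fvalue Co1_fact.
Proof. by rewrite /Co1_order /fvalue !big_cons big_nil /=; lia. Qed.

Lemma Co2_orderE : Co2_order = fvalue Co2_fact.
Proof. by rewrite /Co2_order /fvalue !big_cons big_nil /=; lia. Qed.

Lemma Co3_orderE : Co3_order = fvalue Co3_fact.
Proof. by rewrite /Co3_order /fvalue !big_cons big_nil /=; lia. Qed.

Lemma Co1_Frobenius_free : Frobenius_free_order Co1_fact. Proof. by vm_compute. Qed.
Lemma Co2_Frobenius_free : Frobenius_free_order Co2_fact. Proof. by vm_compute. Qed.
Lemma Co3_Frobenius_free : Frobenius_free_order Co3_fact. Proof. by vm_compute. Qed.

Local Open Scope group_scope.

Theorem lemma2p10 (gT : finGroupType) (G : {group gT}) :
  #|G| \in [:: Co1_order; Co2_order; Co3_order] ->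
  ~~ [Frobenius G] /\ ~ two_Frobenius_group G.
Proof.
rewrite !inE => /or3P[] /eqP orderG.
- exact: Frobenius_free_order_excluded Co1_Frobenius_free (etrans orderG Co1_orderE).
- exact: Frobenius_free_order_excluded Co2_Frobenius_free (etrans orderG Co2_orderE).
exact: Frobenius_free_order_excluded Co3_Frobenius_free (etrans orderG Co3_orderE).
Qed.
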